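(* Let $\mathfrak{A}$ be a $(\circ,\wedge,\mathsf{A})$-algebra that is representable by partial functions. Then composition is completely right-distributive over joins: for every subset $S\subseteq\mathfrak{A}$ such that $\bigvee S$ exists and every $a\in\mathfrak{A}$, the join $\bigvee\{s\circ a\mid s\in S\}$ exists and equals $(\bigvee S)\circ a$.
   Context: A $(\circ,\wedge,\mathsf{A})$-algebra is a set with two binary operations $\circ,\wedge$ and one unary operation $\mathsf{A}$. An algebra of partial functions of this signature is a set of partial functions, with base $X$ the union of all their domains and ranges, closed under: composition $f\circ g=\{(x,z)\mid \exists y\,(x,y)\in f,(y,z)\in g\}$ (apply $f$ first, then $g$); intersection; antidomain $\mathsf{A}(f)=\{(x,x)\mid x\in X, x\notin\mathrm{dom}(f)\}$. A representation by partial functions is an isomorphism onto such an algebra; $\mathfrak{A}$ is representable if one exists. Joins and meets are taken in the order $a\le b\iff a\wedge b=a$. *)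

Set Implicit Arguments.
Unset Strict Implicit.

Record CMAAlgebra := {
  carrier :> Type;
  comp : carrier -> carrier -> carrier;   (* f ; g : apply f first, then g *)
  meet : carrier -> carrier -> carrier;
  antidom : carrier -> carrier
}.

Definition le {A : CMAAlgebra} (a b : A) : Prop := meet a b = a.

Definition is_join {A : CMAAlgebra} (S : A -> Prop) (j : A) : Prop :=
  (forall s, S s -> le s j) /\
  (forall u, (forall s, S s -> le s u) -> le j u).

Definition rel (X : Type) := X -> X -> Prop.

Definition is_partial_fun (X : Type) (f : rel X) : Prop :=
  forall x y z, f x y -> f x z -> y = z.

Definition base (A : CMAAlgebra) (X : Type) (h : A -> rel X) (x : X) : Prop :=
  exists a y, h a x y \/ h a y x.

Definition is_pfun_representation (A : CMAAlgebra) (X : Type) (h : A -> rel X) : Prop :=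
  (forall a, is_partial_fun (h a)) /\
  (forall a b, (forall x y, h a x y <-> h b x y) -> a = b) /\
  (forall a b x z, h (comp a b) x z <-> exists y, h a x y /\ h b y z) /\
  (forall a b x y, h (meet a b) x y <-> h a x y /\ h b x y) /\
  (forall a x y, h (antidom a) x y <->
                 (x = y /\ base h x /\ ~ (exists z, h a x z))).

Definition representable_pfun (A : CMAAlgebra) : Prop :=
  exists (X : Type) (h : A -> rel X), is_pfun_representation h.

From Stdlib Require Import Classical.

(* Let j be the join of S and u an upper bound of the s;a.  Call a point x bad
   if x is in dom(j;a) but (j;a)(x) <> u(x); the bad points form the domain of
   the term bad := A(A(j;a)) ; A((j;a) /\ u).  Each s in S agrees with j on
   its domain, and s;a <= u, so no bad point lies in dom s: s <= A(bad);j.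
   Hence A(bad);j is an upper bound of S, so j <= A(bad);j: no bad point lies
   in dom j, which says exactly that j;a <= u. *)

Definition rdom {X : Type} (f : rel X) (x : X) : Prop := exists y, f x y.

Section PartialFunctionRepresentation.
Context {A : CMAAlgebra} {X : Type} {h : A -> rel X}.
Hypothesis Hrep : is_pfun_representation h.

Lemma rep_functional {a : A} {x y z} : h a x y -> h a x z -> y = z.
Proof. destruct Hrep as (Hpf & _); exact (Hpf a x y z). Qed.

Lemma rep_comp (a b : A) x z : h (comp a b) x z <-> exists y, h a x y /\ h b y z.
Proof. destruct Hrep as (_ & _ & Hc & _); apply Hc. Qed.

Lemma rep_meet (a b : A) x y : h (meet a b) x y <-> h a x y /\ h b x y.
Proof. destruct Hrep as (_ & _ & _ & Hm & _); apply Hm. Qed.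

Lemma rep_antidom (a : A) x y :
  h (antidom a) x y <-> x = y /\ base h x /\ ~ rdom (h a) x.
Proof. destruct Hrep as (_ & _ & _ & _ & Ha); apply Ha. Qed.

Lemma rep_base (a : A) x y : h a x y -> base h x.
Proof. intros Hxy; exists a, y; auto. Qed.

Lemma le_rep (a b : A) : le a b <-> forall x y, h a x y -> h b x y.
Proof.
  unfold le; split.
  - intros Hab x y Hxy; rewrite <- Hab, rep_meet in Hxy; tauto.
  - intros Hab; destruct Hrep as (_ & Hinj & _); apply Hinj; intros x y.
    rewrite rep_meet; intuition.
Qed.

Lemma le_comp_l (a b c : A) : le a b -> le (comp a c) (comp b c).
Proof.
  rewrite !le_rep; intros Hab x z; rewrite !rep_comp.
  intros (y & Hay & Hcy); eauto.
Qed.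

Lemma le_of_rdom_meet (b u : A) :
  (forall x, rdom (h b) x -> rdom (h (meet b u)) x) -> le b u.
Proof.
  intros Hdom; apply le_rep; intros x z Hxz.
  destruct (Hdom x (ex_intro _ z Hxz)) as (z' & Hm).
  apply rep_meet in Hm as (Hbz' & Huz').
  rewrite (rep_functional Hxz Hbz'); exact Huz'.
Qed.

Lemma rdom_antidom (a : A) x : rdom (h (antidom a)) x <-> base h x /\ ~ rdom (h a) x.
Proof.
  split.
  - intros (y & Hy); apply rep_antidom in Hy; tauto.
  - intros Hx; exists x; apply rep_antidom; tauto.
Qed.

Lemma rep_comp_antidom (c b : A) x y :
  h (comp (antidom c) b) x y <-> ~ rdom (h c) x /\ h b x y.
Proof.
  rewrite rep_comp; split.
  - intros (x' & Hc & Hb); apply rep_antidom in Hc as (<- & _ & Hc); auto.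
  - intros (Hc & Hb); exists x; split; [apply rep_antidom; eauto using rep_base | exact Hb].
Qed.

Lemma rdom_comp_antidom2 (d m : A) x :
  rdom (h (comp (antidom (antidom d)) (antidom m))) x <-> rdom (h d) x /\ ~ rdom (h m) x.
Proof.
  split.
  - intros (y & Hy); apply rep_comp_antidom in Hy as (Hnd & Hm).
    apply rep_antidom in Hm as (_ & Hx & Hnm); split; [|exact Hnm].
    apply NNPP; intros Hd; apply Hnd, rdom_antidom; auto.
  - intros ((y & Hd) & Hnm); exists x; apply rep_comp_antidom; split.
    + intros Hnd; apply rdom_antidom in Hnd; firstorder.
    + apply rep_antidom; eauto using rep_base.
Qed.

Lemma rdom_join_disjoint {S : A -> Prop} {j : A} (c : A) :
  is_join S j ->
  (forall s x, S s -> rdom (h s) x -> ~ rdom (h c) x) ->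
  forall x, rdom (h j) x -> ~ rdom (h c) x.
Proof.
  intros [Hub Hleast] Hdisj.
  assert (Hj : le j (comp (antidom c) j)).
  { apply Hleast; intros s Hs; apply le_rep; intros x y Hsxy.
    apply rep_comp_antidom; split.
    - exact (Hdisj s x Hs (ex_intro _ y Hsxy)).
    - exact (proj1 (le_rep s j) (Hub s Hs) x y Hsxy). }
  intros x (y & Hxy); apply (proj1 (le_rep _ _) Hj), rep_comp_antidom in Hxy; tauto.
Qed.

Lemma rdom_meet_of_le {s j a u : A} {x} :
  le s j -> le (comp s a) u -> rdom (h s) x -> rdom (h (comp j a)) x ->
  rdom (h (meet (comp j a) u)) x.
Proof.
  intros Hsj Hsau (y & Hsy) (z & Hjaz).
  exists z; apply rep_meet; split; [exact Hjaz|].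
  apply rep_comp in Hjaz as (y' & Hjy' & Hay').
  apply (proj1 (le_rep _ _) Hsau), rep_comp; exists y; split; [exact Hsy|].
  rewrite (rep_functional (proj1 (le_rep _ _) Hsj x y Hsy) Hjy'); exact Hay'.
Qed.

End PartialFunctionRepresentation.

Theorem mainTheorem9 (A : CMAAlgebra) (Hrep : representable_pfun A) :
  forall (S : A -> Prop) (j : A) (a : A),
    is_join S j ->
    is_join (fun t => exists s, S s /\ t = comp s a) (comp j a).
Proof.
  destruct Hrep as (X & h & Hr).
  intros S j a Hjoin; split.
  - intros t (s & Hs & ->); apply (le_comp_l Hr), (proj1 Hjoin s Hs).
  - intros u Hu.
    set (bad := comp (antidom (antidom (comp j a))) (antidom (meet (comp j a) u))).
    assert (Hgood : forall x, rdom (h j) x -> ~ rdom (h bad) x).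
    { apply (rdom_join_disjoint Hr bad Hjoin); intros s x Hs Hsx Hbad; apply (rdom_comp_antidom2 Hr) in Hbad as (Hja & Hnm); apply Hnm.
      exact (rdom_meet_of_le Hr (proj1 Hjoin s Hs) (Hu _ (ex_intro _ s (conj Hs eq_refl))) Hsx Hja). }
    apply (le_of_rdom_meet Hr); intros x Hja.
    apply NNPP; intros Hnm.
    destruct Hja as (z & Hz); pose proof Hz as Hz'.
    apply (rep_comp Hr) in Hz' as (y & Hjy & _).
    apply (Hgood x (ex_intro _ y Hjy)), (rdom_comp_antidom2 Hr).
    split; [exists z|]; assumption.
Qed.
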